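(* Let $\phi(\mu)=\sum_{i=1}^n\operatorname{arccot}\mu_i$ for $\mu\in\mathbb{R}^n$, let $\Gamma=\{\mu\in\mathbb{R}^n:0<\phi(\mu)<\pi\}$ and $f(\mu)=\cot\phi(\mu)$ on $\Gamma$. For $\sigma\in\mathbb{R}$ let $\Gamma^\sigma=\{\mu\in\mathbb{R}^n:0<\phi(\mu)<\operatorname{arccot}\sigma\}$. Then for any $\sigma,\sigma'\in\mathbb{R}$ with $\sigma<\sigma'$ there exists a constant $N>0$, depending only on $\sigma$ and $\sigma'$, such that $$\Gamma^\sigma+N\mathbf 1\subset\Gamma^{\sigma'},$$ where $\mathbf 1=(1,\dots,1)$.
   Context: $\operatorname{arccot}:\mathbb{R}\to(0,\pi)$ denotes the inverse of $\cot$ on $(0,\pi)$. *)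

From HB Require Import structures.
From mathcomp Require Import all_boot all_order all_algebra.
From mathcomp Require Import all_classical all_reals all_analysis.
Set Implicit Arguments. Unset Strict Implicit. Unset Printing Implicit Defensive.
Import Order.TTheory GRing.Theory Num.Theory.
Local Open Scope ring_scope.

(* arccot : R -> (0, pi), the inverse of cot on (0, pi). *)
Definition arccot {R : realType} (x : R) : R := pi / 2 - atan x.

Definition phi {R : realType} {n : nat} (mu : 'rV[R]_n) : R :=
  \sum_(i < n) arccot (mu ord0 i).

Definition Gamma {R : realType} (n : nat) : set 'rV[R]_n :=
  [set mu | 0 < phi mu < pi].

Definition f {R : realType} {n : nat} (mu : 'rV[R]_n) : R :=
  cos (phi mu) / sin (phi mu).

Definition Gamma_sigma {R : realType} (n : nat) (sigma : R) : set 'rV[R]_n :=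
  [set mu | 0 < phi mu < arccot sigma].

Definition ones {R : realType} (n : nat) : 'rV[R]_n := const_mx 1.

From HB Require Import structures.
From mathcomp Require Import all_boot all_order all_algebra.
From mathcomp Require Import all_classical all_reals all_analysis.
From mathcomp Require Import lra.
Import Order.TTheory GRing.Theory Num.Theory.
Local Open Scope ring_scope.

(* Each term arccot mu_i lies in (0, pi) and is bounded by phi mu, so every
   mu in Gamma^sigma has all coordinates above sigma.  Since arccot decreases
   to 0 at +oo, a shift by N large enough makes each of the n terms smaller
   than arccot sigma' / n, hence phi(mu + N 1) < arccot sigma'. *)

Section Arccot.
Context {R : realType}.
Implicit Types x y c : R.

Lemma arccot_gt0 x : 0 < arccot x.
Proof. by rewrite /arccot subr_gt0 atan_ltpi2. Qed.

Lemma arccot_ltpi x : arccot x < pi.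
Proof. by rewrite /arccot; have := atan_gtNpi2 x; have := @pi_gt0 R; lra. Qed.

Lemma ltr_arccot x y : (arccot x < arccot y) = (y < x).
Proof.
rewrite /arccot ltrD2l ltrN2; apply/idP/idP; last exact: lt_atan.
by apply: contraLR; rewrite -!leNgt; apply: le_atan.
Qed.

Lemma arccot_tan_pi2B c : 0 < c < pi -> arccot (tan (pi / 2 - c)) = c.
Proof.
move=> /andP[c_gt0 c_ltpi]; rewrite /arccot tanK; first lra.
by rewrite in_itv /=; apply/andP; split; lra.
Qed.

End Arccot.

Section Phi.
Context {R : realType} {n : nat}.
Implicit Types mu : 'rV[R]_n.

Lemma arccot_le_phi mu i : arccot (mu ord0 i) <= phi mu.
Proof.
rewrite /phi (bigD1 i) //= lerDl sumr_ge0 // => j _.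
exact/ltW/arccot_gt0.
Qed.

Lemma Gamma_sigma_coord_gt sigma mu i :
  Gamma_sigma sigma mu -> sigma < mu ord0 i.
Proof.
move=> /andP[_ phi_lt]; rewrite -ltr_arccot.
exact: le_lt_trans (arccot_le_phi mu i) phi_lt.
Qed.

End Phi.

Section PhiNonempty.
Context {R : realType} {n : nat}.
Implicit Types mu : 'rV[R]_n.+1.

Lemma phi_gt0 mu : 0 < phi mu.
Proof.
rewrite /phi (bigD1 ord0) //=; apply: ltr_pwDl; first exact: arccot_gt0.
by apply: sumr_ge0 => i _; exact/ltW/arccot_gt0.
Qed.

Lemma phi_lt_mul c mu :
  (forall i, arccot (mu ord0 i) < c) -> phi mu < n.+1%:R * c.
Proof.
move=> arccot_lt; rewrite mulr_natl -[X in c *+ X](card_ord n.+1) -sumr_const.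
apply: ltr_sum => [|i _]; last exact: arccot_lt.
by apply/hasP; exists ord0; rewrite ?mem_index_enum.
Qed.

End PhiNonempty.

Theorem proposition2p6 (R : realType) (n : nat) (sigma sigma' : R) :
  sigma < sigma' ->
  exists N : R, 0 < N /\
    forall mu : 'rV[R]_n, @Gamma_sigma R n sigma mu ->
      @Gamma_sigma R n sigma' (mu + N *: @ones R n).
Proof.
move=> lt_sigma; case: n => [|n].
  by exists 1; split=> // mu; rewrite /Gamma_sigma /phi /= big_ord0 ltxx.
have n_gt0 : (0 : R) < n.+1%:R by rewrite ltr0n.
set c := arccot sigma' / n.+1%:R.
have c_bounds : 0 < c < pi.
  have c_le : c <= arccot sigma'.
    by rewrite /c ler_pdivrMr // ler_peMr ?ler1n // ltW ?arccot_gt0.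
  by rewrite divr_gt0 ?arccot_gt0 //= (le_lt_trans c_le) ?arccot_ltpi.
set Y := tan (pi / 2 - c).
set N := Num.max (Y - sigma) 1.
have N_ge : Y - sigma <= N by rewrite le_max lexx.
exists N; split; first by rewrite lt_max ltr01 orbT.
move=> mu mu_in; apply/andP; split; first exact: phi_gt0.
rewrite -[arccot sigma'](divfK (lt0r_neq0 n_gt0)) mulrC -/c.
apply: phi_lt_mul => i; rewrite !mxE mulr1 -(arccot_tan_pi2B _ c_bounds) -/Y.
rewrite ltr_arccot -[Y](subrK sigma) addrC.
exact: ler_ltD N_ge (Gamma_sigma_coord_gt _ _ i mu_in).
Qed.
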